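(* Let $d\in\mathbb{N}$, $a<b$, $\alpha\in[0,1]$, $\rho\in\mathbb{R}^{d\times d}$ an invertible diagonal matrix, and $H:\mathbb{R}^d\times\mathbb{R}^d\to\mathbb{R}$, $(z,p_z)\mapsto H(z,p_z)$, a $C^1$ function that is even in its second variable, $H(z,-p_z)=H(z,p_z)$. Consider the systems, for smooth curves on $[a,b]$, $$\text{(a)}\quad \dot x=\frac{\partial H}{\partial p_x}(x,p_x),\quad D^\alpha_-x=-\rho^{-1}p^\alpha_y,\quad \dot p_x=-\frac{\partial H}{\partial x}(x,p_x)+D^\alpha_-p^\alpha_y,$$ $$\text{(b)}\quad \dot y=\frac{\partial H}{\partial p_y}(y,p_y),\quad D^\alpha_+y=-\rho^{-1}p^\alpha_x,\quad \dot p_y=-\frac{\partial H}{\partial y}(y,p_y)+D^\alpha_+p^\alpha_x.$$ Let $x,p_x,p^\alpha_y:[a,b]\to\mathbb{R}^d$ be smooth and set $y(t):=x(a+b-t)$, $p_y(t):=-p_x(a+b-t)$, $p^\alpha_x(t):=p^\alpha_y(a+b-t)$ (equivalently $p^\alpha_y(t)=p^\alpha_x(a+b-t)$). Then system (b) is system (a) in reversed time $\tilde t=a+b-t$: each equation of (b) holds at time $t$ if and only if the corresponding equation of (a) holds at time $\tilde t=a+b-t$.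
   Context: For $f:[a,b]\to\mathbb{R}$ (componentwise for vector-valued functions), $D^\alpha_-f(t)=\frac{1}{\Gamma(1-\alpha)}\frac{d}{dt}\int_a^t(t-\tau)^{-\alpha}f(\tau)\,d\tau$ and $D^\alpha_+f(t)=-\frac{1}{\Gamma(1-\alpha)}\frac{d}{dt}\int_t^b(\tau-t)^{-\alpha}f(\tau)\,d\tau$ (Riemann–Liouville fractional derivatives). Systems (a),(b) are the restricted fractional Hamilton equations for the Hamiltonian $H(x,p_x)+H(y,p_y)-p^\alpha_x\,\rho^{-1}\,p^\alpha_y$. *)

From mathcomp Require Import all_boot all_order all_algebra.
From mathcomp Require Import all_classical all_reals all_analysis.
Set Implicit Arguments. Unset Strict Implicit. Unset Printing Implicit Defensive.
Import Order.TTheory GRing.Theory Num.Theory.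
Import numFieldNormedType.Exports.
Local Open Scope classical_set_scope.
Local Open Scope ring_scope.

Definition Gamma_fn {R : realType} (s : R) : R :=
  fine (\int[@lebesgue_measure R]_(u in `]0%R, +oo[%classic)
          ((u `^ (s - 1)) * expR (- u))%:E).

(* For alpha = 1 the standard convention D^1_- f = f' is used. *)
Definition RL_left {R : realType} (a alpha : R) (f : R -> R) (t : R) : R :=
  if alpha == 1 then derive1 f t
  else (Gamma_fn (1 - alpha))^-1 *
       derive1 (fun s => Rintegral (@lebesgue_measure R) `[a, s]%classic
                    (fun tau => (s - tau) `^ (- alpha) * f tau)) t.

(* Right Riemann-Liouville derivative:
   D^alpha_+ f(t) = -1/Gamma(1-alpha) d/dt int_t^b (tau-t)^(-alpha) f(tau) dtau.
   For alpha = 1 the standard convention D^1_+ f = - f' is used. *)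
Definition RL_right {R : realType} (b alpha : R) (f : R -> R) (t : R) : R :=
  if alpha == 1 then - derive1 f t
  else - ((Gamma_fn (1 - alpha))^-1 *
       derive1 (fun s => Rintegral (@lebesgue_measure R) `[s, b]%classic
                    (fun tau => (tau - s) `^ (- alpha) * f tau)) t).

Definition RLv_left {R : realType} {d : nat} (a alpha : R)
  (F : R -> 'cV[R]_d) (t : R) : 'cV[R]_d :=
  \col_i RL_left a alpha (fun s => F s i 0) t.

Definition RLv_right {R : realType} {d : nat} (b alpha : R)
  (F : R -> 'cV[R]_d) (t : R) : 'cV[R]_d :=
  \col_i RL_right b alpha (fun s => F s i 0) t.

Definition dotv {R : realType} {d : nat} (F : R -> 'cV[R]_d) (t : R) : 'cV[R]_d :=
  \col_i derive1 (fun s => F s i 0) t.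

Definition dHdz {R : realType} {d : nat} (H : 'cV[R]_d -> 'cV[R]_d -> R)
  (z p : 'cV[R]_d) : 'cV[R]_d :=
  \col_i derive1 (fun s => H (z + s *: delta_mx i 0) p) 0.

Definition dHdp {R : realType} {d : nat} (H : 'cV[R]_d -> 'cV[R]_d -> R)
  (z p : 'cV[R]_d) : 'cV[R]_d :=
  \col_i derive1 (fun s => H z (p + s *: delta_mx i 0)) 0.

Definition C1_hamiltonian {R : realType} {d : nat}
  (H : 'cV[R]_d -> 'cV[R]_d -> R) : Prop :=
  forall i : 'I_d,
    (forall z p : 'cV[R]_d,
        derivable (fun s : R => H (z + s *: delta_mx i 0) p) 0 1 /\
        derivable (fun s : R => H z (p + s *: delta_mx i 0)) 0 1) /\
    continuous (fun q : 'cV[R]_d * 'cV[R]_d => dHdz H q.1 q.2 i 0) /\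
    continuous (fun q : 'cV[R]_d * 'cV[R]_d => dHdp H q.1 q.2 i 0).

Definition smooth_fun {R : realType} (f : R -> R) : Prop :=
  forall (n : nat) (t : R), derivable (iter n (fun g : R -> R => derive1 g) f) t 1.

Definition smooth_curve {R : realType} {d : nat} (F : R -> 'cV[R]_d) : Prop :=
  forall i : 'I_d, smooth_fun (fun s => F s i 0).

Definition sysA1 {R : realType} {d : nat} (H : 'cV[R]_d -> 'cV[R]_d -> R)
  (x px : R -> 'cV[R]_d) (t : R) : Prop :=
  dotv x t = dHdp H (x t) (px t).
Definition sysA2 {R : realType} {d : nat} (a alpha : R) (rho : 'M[R]_d)
  (x pya : R -> 'cV[R]_d) (t : R) : Prop :=
  RLv_left a alpha x t = - (invmx rho *m pya t).
Definition sysA3 {R : realType} {d : nat} (a alpha : R)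
  (H : 'cV[R]_d -> 'cV[R]_d -> R) (x px pya : R -> 'cV[R]_d) (t : R) : Prop :=
  dotv px t = - dHdz H (x t) (px t) + RLv_left a alpha pya t.

Definition sysB1 {R : realType} {d : nat} (H : 'cV[R]_d -> 'cV[R]_d -> R)
  (y py : R -> 'cV[R]_d) (t : R) : Prop :=
  dotv y t = dHdp H (y t) (py t).
Definition sysB2 {R : realType} {d : nat} (b alpha : R) (rho : 'M[R]_d)
  (y pxa : R -> 'cV[R]_d) (t : R) : Prop :=
  RLv_right b alpha y t = - (invmx rho *m pxa t).
Definition sysB3 {R : realType} {d : nat} (b alpha : R)
  (H : 'cV[R]_d -> 'cV[R]_d -> R) (y py pxa : R -> 'cV[R]_d) (t : R) : Prop :=
  dotv py t = - dHdz H (y t) (py t) + RLv_right b alpha pxa t.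

From mathcomp Require Import all_boot all_order all_algebra.
From mathcomp Require Import all_classical all_reals all_analysis.
From mathcomp Require Import measurable_realfun lra.
Import Order.TTheory GRing.Theory Num.Theory.
Import numFieldNormedType.Exports.
Local Open Scope classical_set_scope.
Local Open Scope ring_scope.

(* The reflection t |-> a + b - t reverses the sign of every ordinary
   derivative and, since Lebesgue measure is reflection invariant, maps the
   left Riemann-Liouville integral on [a, t] onto the right one on
   [a + b - t, b]; hence D^alpha_+ of a reflected curve is the reflected
   D^alpha_- of the curve. *)

Lemma dnbhs_oppr {R : numFieldType} (r : R) : -%R @ r^' = (- r)^'.
Proof.
rewrite predeqE => A; split=> -[e /= e0 reA]; exists e => //= y hy yr.
- rewrite -[y]opprK; apply: reA; last by rewrite eqr_oppLR.
  by move: hy; rewrite /ball_ /= opprK -opprD normrN.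
- apply: reA; last by rewrite eqr_opp.
  by move: hy; rewrite /ball_ /= opprK distrC addrC.
Qed.

(* Unlike [limN], no convergence hypothesis: a divergent limit takes the
   default value 0, which negation fixes. *)
Lemma limN_total {R : realType} {T : Type} (F : set_system T)
    {FF : ProperFilter F} (f : T -> R) :
  lim (- f @ F) = - lim (f @ F).
Proof.
have [cf|ncf] := pselect (cvg (f @ F)); first exact: limN.
have ncNf : ~ cvg (- f @ F).
  move=> /cvg_ex[l fl]; apply: ncf; apply/cvg_ex; exists (- l).
  by apply/(@cvgNP _ _ _ F _ f (- l)); rewrite (opprK (l : R)).
by rewrite (dvgP ncf) (dvgP ncNf) oppr0.
Qed.

(* No differentiability is needed: the difference quotients of the two sides
   correspond under h |-> -h, which preserves the filter 0^'. *)
Lemma derive1_comp_subr {R : realType} (f : R -> R) (c t : R) :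
  derive1 (fun s => f (c - s)) t = - derive1 f (c - t).
Proof.
rewrite /derive1; set q := fun h : R => h^-1 *: (f (h + (c - t)) - f (c - t)).
have -> : (fun h : R => h^-1 *: (f (c - (h + t)) - f (c - t))) =
          fun h => - q (- h).
  by apply/funext => h; rewrite /q invrN scaleNr opprK opprD addrCA.
by rewrite -[X in lim X]/(- q @ (-%R @ 0^')) dnbhs_oppr oppr0 limN_total.
Qed.

Section lebesgue_measure_reflection.
Context {R : realType}.
Local Notation mu := (@lebesgue_measure R).

Lemma lebesgue_measure_subr (c : R) (A : set R) : measurable A ->
  pushforward mu (fun x => c - x : measurableTypeR R) A = mu A.
Proof.
move=> mA; apply/esym/lebesgue_measure_unique => //; first exact: measurable_funB.
move=> ? _ [[u v] _ <-].
change (mu `]u, v] = mu ((fun x => c - x) @^-1` `]u, v])).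
have -> : (fun x => c - x) @^-1` `]u, v] = `[c - v, c - u[%classic.
  by apply/seteqP; split=> x /=; rewrite !in_itv /= => /andP[? ?]; apply/andP; split; lra.
rewrite !lebesgue_measure_itv /= !lte_fin ltrD2l ltrN2.
by case: ifP => // _; rewrite -!EFinB; congr EFin; lra.
Qed.

Lemma integral_comp_subr (c : R) (D : set R) (f : R -> \bar R) :
  measurable D -> measurable_fun setT f ->
  (\int[mu]_(x in (fun x => c - x)%R @^-1` D) f (c - x)%R =
   \int[mu]_(x in D) f x)%E.
Proof.
move=> mD mf.
have mB : measurable_fun setT (fun x : R => c - x : measurableTypeR R).
  exact: measurable_funB.
have ge0_reflect (g : R -> \bar R) :
    measurable_fun setT g -> (forall x, 0 <= g x)%E ->
    (\int[mu]_(x in (fun x : R => c - x)%R @^-1` D) g (c - x)%R =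
     \int[mu]_(x in D) g x)%E.
  move=> mg g0.
  rewrite -[LHS]/(\int[mu]_(x in _) (g \o (fun x : R => c - x)%R) x)%E.
  rewrite -(@ge0_integral_pushforward _ _ (measurableTypeR R) (measurableTypeR R) R _ mB mu) //;
    last exact: measurable_funTS.
  by apply: eq_measure_integral => A mA _; exact: lebesgue_measure_subr.
rewrite -[LHS]/(\int[mu]_(x in _) (f \o (fun x : R => c - x)%R) x)%E.
rewrite integralE funepos_comp funeneg_comp !ge0_reflect -?integralE //.
- exact: measurable_funeneg.
- exact: measurable_funepos.
Qed.

Definition RL_left_integral (a alpha : R) (f : R -> R) (s : R) : R :=
  Rintegral mu `[a, s] (fun tau => (s - tau) `^ (- alpha) * f tau).

Definition RL_right_integral (b alpha : R) (f : R -> R) (s : R) : R :=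
  Rintegral mu `[s, b] (fun tau => (tau - s) `^ (- alpha) * f tau).

Lemma RL_right_integral_reflection (a b alpha : R) (f : R -> R) (s : R) :
  measurable_fun setT f ->
  RL_right_integral b alpha (fun tau => f (a + b - tau)) s =
  RL_left_integral a alpha f (a + b - s).
Proof.
move=> mf; rewrite /RL_right_integral /RL_left_integral /Rintegral; congr fine.
pose h u := (a + b - s - u) `^ (- alpha) * f u.
have mh : measurable_fun setT (EFin \o h).
  apply/measurable_EFinP/measurable_funM => //.
  by apply: measurableT_comp (measurable_powR _) _; exact: measurable_funB.
have := integral_comp_subr (a + b) _ _ (measurable_itv `[a, a + b - s]) mh.
rewrite /h /= => <-.
have -> : (fun x => a + b - x) @^-1` `[a, a + b - s] = `[s, b]%classic.
  by apply/seteqP; split=> x /=; rewrite !in_itv /= => /andP[? ?]; apply/andP; split; lra.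
by apply: eq_integral => x _; congr ((_ `^ _ * _)%:E); lra.
Qed.

Lemma RL_right_reflection (a b alpha : R) (f : R -> R) (t : R) :
  measurable_fun setT f ->
  RL_right b alpha (fun s => f (a + b - s)) t = RL_left a alpha f (a + b - t).
Proof.
move=> mf; rewrite /RL_right /RL_left; case: ifP => _.
  by rewrite (derive1_comp_subr f) opprK.
rewrite -/(RL_right_integral b alpha _) -/(RL_left_integral a alpha f).
rewrite (_ : RL_right_integral _ _ _ = fun s => RL_left_integral a alpha f (a + b - s)).
  by rewrite [in LHS](derive1_comp_subr (RL_left_integral a alpha f) (a + b) t) mulrN opprK.
by apply/funext => s; exact: RL_right_integral_reflection.
Qed.

End lebesgue_measure_reflection.

Lemma smooth_fun_derivable {R : realType} (f : R -> R) (t : R) :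
  smooth_fun f -> derivable f t 1.
Proof. by move=> sf; exact: (sf 0%N t). Qed.

Lemma smooth_fun_measurable {R : realType} (f : R -> R) :
  smooth_fun f -> measurable_fun setT f.
Proof.
move=> sf; apply: continuous_measurable_fun => t.
exact/differentiable_continuous/derivable1_diffP/smooth_fun_derivable.
Qed.

Section curves.
Context {R : realType} {d : nat}.
Implicit Types (F : R -> 'cV[R]_d) (a b c t alpha : R).

Lemma dotv_comp_subr F c t : dotv (fun s => F (c - s)) t = - dotv F (c - t).
Proof.
by apply/matrixP => i j; rewrite !mxE (derive1_comp_subr (fun u => F u i 0)).
Qed.

Lemma dotvN F t : (forall i, derivable (fun s => F s i 0) t 1) ->
  dotv (fun s => - F s) t = - dotv F t.
Proof.
move=> dF; apply/matrixP => i j; rewrite !mxE.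
rewrite (_ : (fun s => (- F s) i 0) = - (fun s => F s i 0)); last first.
  by apply/funext => s; rewrite mxE.
exact: derive1N.
Qed.

Lemma RLv_right_reflection a b alpha F t :
  (forall i, measurable_fun setT (fun s => F s i 0)) ->
  RLv_right b alpha (fun s => F (a + b - s)) t = RLv_left a alpha F (a + b - t).
Proof.
by move=> mF; apply/matrixP => i j; rewrite !mxE; exact: RL_right_reflection (mF i).
Qed.

Variable H : 'cV[R]_d -> 'cV[R]_d -> R.
Hypothesis H_even : forall z p, H z (- p) = H z p.

Lemma dHdp_oppr z p : dHdp H z (- p) = - dHdp H z p.
Proof.
apply/matrixP => i j; rewrite !mxE.
have -> : (fun s => H z (- p + s *: delta_mx i 0)) =
          fun s => H z (p + (0 - s) *: delta_mx i 0).
  by apply/funext => s; rewrite -H_even opprD opprK sub0r scaleNr.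
by rewrite (derive1_comp_subr (fun s => H z (p + s *: delta_mx i 0)) 0 0) subr0.
Qed.

Lemma dHdz_oppr z p : dHdz H z (- p) = dHdz H z p.
Proof.
apply/matrixP => i j; rewrite !mxE (_ : (fun s => H (z + s *: delta_mx i 0) (- p)) =
                                        fun s => H (z + s *: delta_mx i 0) p) //.
by apply/funext => s; rewrite H_even.
Qed.

End curves.

Theorem proposition3p13 (R : realType) (d : nat) (a b alpha : R)
  (rho : 'M[R]_d) (H : 'cV[R]_d -> 'cV[R]_d -> R)
  (x px pya y py pxa : R -> 'cV[R]_d) :
  a < b -> 0 <= alpha <= 1 ->
  is_diag_mx rho -> rho \in unitmx ->
  C1_hamiltonian H ->
  (forall z p : 'cV[R]_d, H z (- p) = H z p) ->
  smooth_curve x -> smooth_curve px -> smooth_curve pya ->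
  (forall t, y t = x (a + b - t)) ->
  (forall t, py t = - px (a + b - t)) ->
  (forall t, pxa t = pya (a + b - t)) ->
  forall t : R, a <= t <= b ->
    (sysB1 H y py t <-> sysA1 H x px (a + b - t)) /\
    (sysB2 b alpha rho y pxa t <-> sysA2 a alpha rho x pya (a + b - t)) /\
    (sysB3 b alpha H y py pxa t <-> sysA3 a alpha H x px pya (a + b - t)).
Proof.
move=> _ _ _ _ _ H_even sx spx spya yE pyE pxaE t _.
have -> : y = fun s => x (a + b - s) by apply/funext.
have -> : py = fun s => - px (a + b - s) by apply/funext.
have -> : pxa = fun s => pya (a + b - s) by apply/funext.
rewrite /sysB1 /sysA1 /sysB2 /sysA2 /sysB3 /sysA3.
rewrite dotv_comp_subr (dotv_comp_subr (fun s => - px s)) dotvN; last first.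
  by move=> i; exact: smooth_fun_derivable.
rewrite dHdp_oppr // dHdz_oppr // !RLv_right_reflection; last 2 first.
- by move=> i; exact: smooth_fun_measurable.
- by move=> i; exact: smooth_fun_measurable.
rewrite opprK; split; last by [].
by split=> [/oppr_inj | ->].
Qed.
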